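(* Let $n\ge2$, let $c=(c_{i,j})$ be an $n\times(n+1)$ matrix with entries in $\{0,1\}$, $\sigma_1,\ldots,\sigma_n>0$, $\gamma_1,\ldots,\gamma_{n+1}>0$. Let $\mathbf{X}=(X_1,\ldots,X_n)'$ have decumulative distribution function \[ \mathbf{P}[X_1>x_1,\ldots,X_n>x_n]=\prod_{j=1}^{n+1}\left(1+\sum_{i=1}^n\frac{c_{i,j}}{\sigma_i}x_i\right)^{-\gamma_j},\quad (x_1,\ldots,x_n)'\in(0,\infty)^n. \] For $1\le k\ne l\le n$ define $\gamma_{c,(k,l)}=\gamma_{c,(l,k)}=\sum_jc_{k,j}c_{l,j}\gamma_j$ (assumed $>0$), $\gamma_{c,k}=\sum_jc_{k,j}(1-c_{l,j})\gamma_j$, $\gamma_{c,l}=\sum_jc_{l,j}(1-c_{k,j})\gamma_j$, $\gamma^\ast_{c,l}=\gamma_{c,l}+\gamma_{c,(k,l)}$, and $m(x)=\frac{\sigma_k}{\gamma_{c,(k,l)}}\left(1+\frac{x}{\sigma_l}\right)$. Then for $x_k,x_l>0$, \[ \mathbf{P}[X_k>x_k\mid X_l=x_l]=\left(\frac{\gamma_{c,(k,l)}}{\gamma^\ast_{c,l}}+\frac{\gamma_{c,l}}{\gamma^\ast_{c,l}}\left(1+\frac{x_k}{\gamma_{c,(k,l)}m(x_l)}\right)\right)\left(1+\frac{x_k}{\sigma_k}\right)^{-\gamma_{c,k}}\left(1+\frac{x_k}{\gamma_{c,(k,l)}m(x_l)}\right)^{-\gamma_{c,(l,k)}-1}. \]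 *)

From HB Require Import structures.
From mathcomp Require Import all_boot all_order all_algebra.
From mathcomp Require Import all_classical all_reals all_analysis.
Set Implicit Arguments. Unset Strict Implicit. Unset Printing Implicit Defensive.
Import Order.TTheory GRing.Theory Num.Theory.
Local Open Scope ring_scope.

Section Gammas.
Variables (R : realType) (n : nat).
Variables (c : 'I_n -> 'I_n.+1 -> bool) (gamma : 'I_n.+1 -> R).

Definition gamma_pair (k l : 'I_n) : R :=
  \sum_(j < n.+1) (c k j)%:R * (c l j)%:R * gamma j.

Definition gamma_single (k l : 'I_n) : R :=
  \sum_(j < n.+1) (c k j)%:R * (1 - (c l j)%:R) * gamma j.

Definition gamma_star (k l : 'I_n) : R :=
  gamma_single l k + gamma_pair k l.

Definition m_fun (sigma : 'I_n -> R) (k l : 'I_n) (x : R) : R :=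
  sigma k / gamma_pair k l * (1 + x / sigma l).
End Gammas.

From HB Require Import structures.
From mathcomp Require Import all_boot all_order all_algebra.
From mathcomp Require Import all_classical all_reals all_analysis.
From mathcomp Require Import ring.
Import Order.TTheory GRing.Theory Num.Theory.
Import numFieldNormedType.Exports.
Local Open Scope classical_set_scope.
Local Open Scope ring_scope.

(* Both probabilities in the ratio are differences of the bivariate survival
   function S(a, y) = P[X_k > a, X_l > y] at y - h and y + h, so by the symmetric
   difference quotient the ratio tends to the quotient of the y-derivatives of
   S(x_k, .) and S(0, .) at x_l.  The survival formula extends to the closed
   orthant by continuity of P from below; hence the X_i are almost surely
   positive and S is the joint formula with all other coordinates set to 0.
   Grouping the factors j according to (c_{k,j}, c_{l,j}) gives
   S(a, y) = (1 + a/sigma_k + y/sigma_l)^(-gamma_(k,l))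
             * (1 + a/sigma_k)^(-gamma_k) * (1 + y/sigma_l)^(-gamma_l),
   and the formula follows from its logarithmic derivative in y. *)

Section powR_facts.
Context {R : realType}.

Lemma powR_subr1 (x p : R) : 0 < x -> x `^ (p - 1) = x `^ p / x.
Proof. by move=> x_gt0; rewrite powRB ?(gt_eqF x_gt0) ?implybT // powRr1 // ltW. Qed.

Lemma powR_sum (I : Type) (r : seq I) (P : pred I) (e : I -> R) (x : R) : 0 < x ->
  x `^ (\sum_(i <- r | P i) e i) = \prod_(i <- r | P i) x `^ (e i).
Proof.
move=> x_gt0; apply/esym/(big_ind2 (fun p q => p = x `^ q)) => [|p p' q q' -> ->|//].
- by rewrite powRr0.
- by rewrite powRD // (gt_eqF x_gt0) implybT.
Qed.

Lemma prod_powR_bool2 (I : Type) (r : seq I) (b1 b2 : I -> bool) (g : I -> R)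
    (s t : R) : 0 <= s -> 0 <= t ->
  \prod_(j <- r) (1 + ((b1 j)%:R * s + (b2 j)%:R * t)) `^ (- g j) =
  (1 + s + t) `^ (- \sum_(j <- r) (b1 j)%:R * (b2 j)%:R * g j)
  * (1 + s) `^ (- \sum_(j <- r) (b1 j)%:R * (1 - (b2 j)%:R) * g j)
  * (1 + t) `^ (- \sum_(j <- r) (b2 j)%:R * (1 - (b1 j)%:R) * g j).
Proof.
move=> s_ge0 t_ge0.
have st_gt0 : 0 < 1 + s + t by rewrite -addrA ltr_pwDl ?addr_ge0.
rewrite -!sumrN !powR_sum ?ltr_pwDl // -!big_split /=.
apply: eq_bigr => j _.
by case: (b1 j); case: (b2 j); rewrite /= ?(subrr, subr0, mul0r, mul1r, mulr0,
  mulr1, oppr0, powRr0, add0r, addr0, powR1, addrA).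
Qed.

Lemma is_derive_powR_affine (p : R) {b s y : R} : 0 < b + y / s ->
  is_derive y 1 (fun z => (b + z / s) `^ p) (p * (b + y / s) `^ (p - 1) / s).
Proof.
move=> base_gt0.
have affine : is_derive y 1 (fun z : R => b + z / s) s^-1.
  have -> : (fun z : R => b + z / s) = cst b + s^-1 \*: id.
    by apply/funext => z /=; rewrite mulrC.
  by apply: is_derive_eq; rewrite add0r [_ *: _]mulr1.
exact: (@is_derive1_comp _ _ (fun z => b + z / s) _ _ _
  (is_derive1_powR p base_gt0) affine).
Qed.

End powR_facts.

Section symmetric_quotient.
Context {R : realType}.

Lemma is_derive_sym_quotient (f : R -> R) (x df : R) : is_derive x 1 f df ->
  (fun h => (f (x + h) - f (x - h)) / h) @ 0^'+ --> df *+ 2.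
Proof.
move=> [f_der df_val].
pose q h := h^-1 * (f (x + h) - f x).
have q_cvg : q @ 0^' --> df.
  rewrite -df_val; have -> // : q = fun h => h^-1 *: ((f \o shift x) (h *: 1) - f x).
  by apply/funext => h; rewrite /q /= -[h%:A]/(h * 1) mulr1 (addrC h x).
have q_right : q @ 0^'+ --> df by exact: cvg_dnbhs_at_right.
have q_left : (q \o -%R) @ 0^'+ --> df.
  by rewrite -oppr0; apply/cvg_at_leftNP; exact: cvg_dnbhs_at_left.
have -> : (fun h => (f (x + h) - f (x - h)) / h) = q \+ (q \o -%R).
  apply/funext => h /=; rewrite /q invrN mulNr -mulrBr mulrC; congr (_ * _).
  by rewrite opprB addrA subrK.
by rewrite mulr2n; exact: cvgD.
Qed.

Lemma is_derive_sym_quotient_ratio (f g : R -> R) (x df dg : R) :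
  is_derive x 1 f df -> is_derive x 1 g dg -> dg != 0 ->
  (fun h => (f (x - h) - f (x + h)) / (g (x - h) - g (x + h))) @ 0^'+ --> df / dg.
Proof.
move=> /is_derive_sym_quotient Df /is_derive_sym_quotient Dg dg0.
have dg2 : dg *+ 2 != 0 by rewrite mulrn_eq0 negb_or dg0.
have -> : df / dg = df *+ 2 / (dg *+ 2).
  rewrite -[df *+ 2]mulr_natr -[dg *+ 2]mulr_natr invfM mulrACA.
  by rewrite divff ?mulr1 // pnatr_eq0.
pose sq (u : R -> R) h := (u (x + h) - u (x - h)) / h.
have DfDg : (sq f \* (fun h => (sq g h)^-1)) @ 0^'+ --> df *+ 2 / (dg *+ 2).
  by apply: cvgM => //; exact: cvgV.
apply: cvg_trans DfDg; apply: near_eq_cvg; near=> h.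
have h0 : h != 0 by rewrite gt_eqF //; near: h; exact: nbhs_right_gt.
rewrite /sq /= invfM invrK mulrACA mulVf // mulr1.
by rewrite -[f (x - h) - _]opprB -[g (x - h) - _]opprB invrN mulrNN.
Unshelve. all: by end_near. Qed.

End symmetric_quotient.

Section bivariate_survival.
Context {R : realType}.
Variables (sk sl gp gk gl : R).
Hypotheses (sk_gt0 : 0 < sk) (sl_gt0 : 0 < sl).

Definition biv_surv (a y : R) : R :=
  (1 + a / sk + y / sl) `^ (- gp) * (1 + a / sk) `^ (- gk) * (1 + y / sl) `^ (- gl).

Definition biv_surv_dy (a y : R) : R :=
  - biv_surv a y / sl * (gp / (1 + a / sk + y / sl) + gl / (1 + y / sl)).

Lemma is_derive_biv_surv {a y : R} : 0 <= a -> 0 <= y ->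
  is_derive y 1 (biv_surv a) (biv_surv_dy a y).
Proof.
move=> a_ge0 y_ge0.
have B_gt0 : 0 < 1 + y / sl by rewrite ltr_pwDl // divr_ge0 // ltW.
have A_gt0 : 0 < 1 + a / sk + y / sl.
  by rewrite -addrA ltr_pwDl ?addr_ge0 // divr_ge0 // ltW.
have DA := is_derive_powR_affine (- gp) A_gt0.
have DB := is_derive_powR_affine (- gl) B_gt0.
apply: is_derive_eq (is_deriveM (is_deriveM DA (is_derive_cst _ y 1)) DB) _.
rewrite /biv_surv_dy /biv_surv /= !powR_subr1 // scaler0 add0r /GRing.scale !fctE /=.
move: (1 + a / sk + y / sl) (1 + y / sl) A_gt0 B_gt0 => A B A_gt0 B_gt0.
by field; rewrite !gt_eqF.
Qed.

Hypotheses (gp_gt0 : 0 < gp) (gl_ge0 : 0 <= gl).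

Lemma biv_surv_dy_ratio {a y : R} : 0 <= a -> 0 <= y ->
  biv_surv_dy 0 y != 0 /\
  biv_surv_dy a y / biv_surv_dy 0 y =
  (gp / (gl + gp) + gl / (gl + gp) * (1 + a / (sk * (1 + y / sl))))
  * (1 + a / sk) `^ (- gk) * (1 + a / (sk * (1 + y / sl))) `^ (- gp - 1).
Proof.
move=> a_ge0 y_ge0.
have B_gt0 : 0 < 1 + y / sl by rewrite ltr_pwDl // divr_ge0 // ltW.
have u_gt0 : 0 < 1 + a / (sk * (1 + y / sl)).
  by rewrite ltr_pwDl // divr_ge0 // ltW // mulr_gt0.
have A_eq : 1 + a / sk + y / sl = (1 + a / (sk * (1 + y / sl))) * (1 + y / sl).
  by field; rewrite !gt_eqF // ltr_wpDr.
rewrite /biv_surv_dy /biv_surv mul0r !addr0 powR1 mulr1 A_eq powRM ?ltW //.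
rewrite powR_subr1 //.
have C_gt0 : 0 < 1 + a / sk by rewrite ltr_pwDl // divr_ge0 // ltW.
(* Abstract the positive factors so that [field] treats them as atoms. *)
have := powR_gt0 (- gp) u_gt0; have := powR_gt0 (- gp) B_gt0.
have := powR_gt0 (- gl) B_gt0; have := powR_gt0 (- gk) C_gt0.
move: (1 + a / (sk * (1 + y / sl))) u_gt0 => u u_gt0.
move: (1 + y / sl) B_gt0 => B B_gt0.
move: (u `^ (- gp)) (B `^ (- gp)) (B `^ (- gl)) (_ `^ (- gk)).
move=> U Bp Bl Ck Ck_gt0 Bl_gt0 Bp_gt0 U_gt0.
have sum_gt0 : 0 < gl + gp by rewrite ltr_wpDl.
split; last by field; rewrite !gt_eqF.
rewrite -mulrDl addrC mulNr.
by rewrite mulf_neq0 ?oppr_eq0 ?invr_eq0 ?gt_eqF ?mulr_gt0 ?invr_gt0.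
Qed.

Lemma biv_surv_conditional_cvg {a y : R} : 0 <= a -> 0 <= y ->
  (fun h => (biv_surv a (y - h) - biv_surv a (y + h))
          / (biv_surv 0 (y - h) - biv_surv 0 (y + h))) @ 0^'+ -->
  (gp / (gl + gp) + gl / (gl + gp) * (1 + a / (sk * (1 + y / sl))))
  * (1 + a / sk) `^ (- gk) * (1 + a / (sk * (1 + y / sl))) `^ (- gp - 1).
Proof.
move=> a_ge0 y_ge0; have [dy0_neq0 <-] := biv_surv_dy_ratio a_ge0 y_ge0.
exact: is_derive_sym_quotient_ratio (is_derive_biv_surv a_ge0 y_ge0)
  (is_derive_biv_surv (lexx 0) y_ge0) dy0_neq0.
Qed.

End bivariate_survival.

Section survival_functions.
Context {d} {T : measurableType d} {R : realType} {P : probability T R}.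

Lemma measurable_RV_gt (Y : {RV P >-> R}) (a : R) : measurable [set t | a < Y t].
Proof.
have := measurable_funPTI Y (measurable_itv `]a, +oo[).
by congr measurable; apply/seteqP; split => t /=; rewrite in_itv /= andbT.
Qed.

Lemma measurable_RV_itv (Y : {RV P >-> R}) (a b : R) : measurable [set t | a < Y t <= b].
Proof.
have := measurable_funPTI Y (measurable_itv `]a, b]).
by congr measurable; apply/seteqP; split => t /=; rewrite in_itv.
Qed.

Lemma probability_setI_full {A B : set T} : measurable A -> measurable B ->
  P B = 1%E -> P (A `&` B) = P A.
Proof.
move=> mA mB PB1; rewrite [RHS](measureDI P mA mB).
rewrite [X in (_ = X + _)%E](_ : _ = 0%E) ?add0e //.
have PBc0 : P (~` B) = 0%E by rewrite probability_setC // PB1 subee.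
apply/eqP; rewrite eq_le measure_ge0 andbT -PBc0.
by apply: le_measure; rewrite ?inE; [exact: measurableD | exact: measurableC | move=> t []].
Qed.

Lemma probability_setD_sub (A B : set T) : measurable A -> measurable B ->
  B `<=` A -> P (A `\` B) = (P A - P B)%E.
Proof.
move=> mA mB BA; rewrite measureD // ?(setIidr BA) //.
exact: le_lt_trans (probability_le1 P mA) (ltry 1).
Qed.

Section joint_survival.
Context {Y Z : {RV P >-> R}} {S : R -> R -> R}.
Hypothesis S_joint : forall a y, 0 <= a -> 0 <= y ->
  P [set t | a < Y t /\ y < Z t] = (S a y)%:E.

Lemma joint_gt_itv (a y h : R) : 0 <= a -> 0 <= h <= y ->
  P [set t | a < Y t /\ y - h < Z t <= y + h] = (S a (y - h) - S a (y + h))%:E.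
Proof.
move=> a_ge0 /andP[h_ge0 h_le_y].
have -> : [set t | a < Y t /\ y - h < Z t <= y + h] =
    [set t | a < Y t /\ y - h < Z t] `\` [set t | a < Y t /\ y + h < Z t].
  apply/seteqP; split => t /=.
    by move=> [Ya /andP[Zl Zr]]; split => // -[_]; rewrite ltNge Zr.
  by move=> [[Ya ->] NZ]; split => //=; rewrite leNgt; apply/negP => Zr; exact: NZ.
have gt_meas b w : measurable [set t | b < Y t /\ w < Z t].
  exact: measurableI (measurable_RV_gt Y b) (measurable_RV_gt Z w).
rewrite probability_setD_sub // ?S_joint -?EFinB ?subr_ge0 ?addr_ge0 //.
  exact: le_trans h_le_y.
move=> t [Ya Zr]; split => //; apply: le_lt_trans Zr.
by rewrite lerBlDr -addrA lerDl addr_ge0.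
Qed.

Hypothesis Y_pos : P [set t | 0 < Y t] = 1%E.

Lemma conditional_gt_itv_ratio (a y h : R) : 0 <= a -> 0 <= h <= y ->
  fine (P [set t | a < Y t /\ y - h < Z t <= y + h])
    / fine (P [set t | y - h < Z t <= y + h])
  = (S a (y - h) - S a (y + h)) / (S 0 (y - h) - S 0 (y + h)).
Proof.
move=> a_ge0 hy.
rewrite -(probability_setI_full (measurable_RV_itv Z _ _) (measurable_RV_gt Y 0) Y_pos).
by rewrite setIC !joint_gt_itv.
Qed.

End joint_survival.

Section orthant_survival.
Context {n : nat} {X : 'I_n -> {RV P >-> R}}.

Lemma measurable_all_gt (x : 'I_n -> R) : measurable [set t | forall i, x i < X i t].
Proof.
have -> : [set t | forall i, x i < X i t] = \bigcap_(i in setT) [set t | x i < X i t].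
  by apply/seteqP; split => t /= Xt i *; apply: Xt.
by apply: fin_bigcap_measurable => [|i _]; [exact: finite_finset | exact: measurable_RV_gt].
Qed.

Lemma survival_closed_orthant (F : ('I_n -> R) -> R) (x : 'I_n -> R) :
  (forall x, (forall i, 0 < x i) -> P [set t | forall i, x i < X i t] = (F x)%:E) ->
  (forall i, 0 <= x i) ->
  (fun m => F (fun i => x i + m.+1%:R^-1)) @ \oo --> F x ->
  P [set t | forall i, x i < X i t] = (F x)%:E.
Proof.
move=> F_law x_ge0 F_cvg.
pose A m := [set t | forall i, x i + m.+1%:R^-1 < X i t].
have A_nd : nondecreasing_seq A.
  move=> m m' mm'; apply/subsetPset => t /= Xt i; apply: le_lt_trans (Xt i).
  by rewrite lerD2l lef_pV2 ?posrE ?ltr0n // ler_nat ltnS.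
have A_cup : \bigcup_m A m = [set t | forall i, x i < X i t].
  apply/seteqP; split => t /=.
    by move=> [m _ Xt] i; apply: lt_trans (Xt i); rewrite ltrDl.
  move=> Xt; have [N XN] := fin_all_exists (fun i => ltr_add_invr (Xt i)).
  exists (\max_i N i) => // i; apply: le_lt_trans (XN i).
  by rewrite lerD2l lef_pV2 ?posrE ?ltr0n // ler_nat ltnS (leq_bigmax i).
have A_meas : measurable (\bigcup_m A m) by rewrite A_cup; exact: measurable_all_gt.
have := @nondecreasing_cvg_mu _ _ R P A (fun m => measurable_all_gt _) A_meas A_nd.
rewrite A_cup => PA_cvg.
have PA_eq : P \o A = (fun m => (F (fun i => x i + m.+1%:R^-1))%:E).
  by apply/funext => m /=; apply: F_law => i; rewrite ltr_wpDl // invr_gt0 ltr0n.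
have F_cvgE : (fun m => (F (fun i => x i + m.+1%:R^-1))%:E) @ \oo --> (F x)%:E.
  by apply: cvg_EFin; first exact: nearW.
by rewrite PA_eq in PA_cvg; exact: cvg_unique _ PA_cvg F_cvgE.
Qed.

End orthant_survival.
End survival_functions.

Section multivariate_pareto.
Context {R : realType} {n : nat}.
Variables (c : 'I_n -> 'I_n.+1 -> bool).
Variables (sigma : 'I_n -> R) (gamma : 'I_n.+1 -> R).
Hypothesis sigma_gt0 : forall i, 0 < sigma i.

Definition pareto_surv (x : 'I_n -> R) : R :=
  \prod_(j < n.+1) (1 + \sum_(i < n) (c i j)%:R / sigma i * x i) `^ (- gamma j).

Lemma pareto_surv0 : pareto_surv (fun=> 0) = 1.
Proof.
by rewrite /pareto_surv big1 // => j _; rewrite big1 ?addr0 ?powR1 // => i _; exact: mulr0.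
Qed.

Lemma pareto_surv_right_cont (x : 'I_n -> R) : (forall i, 0 <= x i) ->
  (fun m => pareto_surv (fun i => x i + m.+1%:R^-1)) @ \oo --> pareto_surv x.
Proof.
move=> x_ge0; apply: cvg_big => [|j _]; first exact: mul_continuous.
have base_gt0 : 0 < 1 + \sum_(i < n) (c i j)%:R / sigma i * x i.
  apply: ltr_pwDl => //; apply: sumr_ge0 => i _.
  by rewrite mulr_ge0 ?divr_ge0 ?(ltW (sigma_gt0 i)).
have base_cvg : (fun m => 1 + \sum_(i < n) (c i j)%:R / sigma i * (x i + m.+1%:R^-1))
    @ \oo --> 1 + \sum_(i < n) (c i j)%:R / sigma i * x i.
  apply: cvgD; first exact: cvg_cst.
  apply: cvg_big => [|i _]; first exact: add_continuous.
  apply: cvgM; first exact: cvg_cst.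
  by rewrite -[X in _ --> X]addr0; apply: cvgD; [exact: cvg_cst | exact: cvg_harmonic].
have powR_cont : {for 1 + \sum_(i < n) (c i j)%:R / sigma i * x i,
    continuous (@powR R ^~ (- gamma j))}.
  apply/differentiable_continuous/derivable1_diffP/derivable_powR.
  by rewrite in_itv /= andbT.
exact: (continuous_cvg _ powR_cont base_cvg).
Qed.

Lemma pareto_surv_pair (k l : 'I_n) (a y : R) : k != l -> 0 <= a -> 0 <= y ->
  pareto_surv (fun i => if i == k then a else if i == l then y else 0) =
  biv_surv (sigma k) (sigma l) (gamma_pair c gamma k l)
    (gamma_single c gamma k l) (gamma_single c gamma l k) a y.
Proof.
move=> kl a_ge0 y_ge0; have lk : (l == k) = false by rewrite eq_sym; exact: negbTE.
have pair_sum j : \sum_(i < n) (c i j)%:R / sigma i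
      * (if i == k then a else if i == l then y else 0)
    = (c k j)%:R * (a / sigma k) + (c l j)%:R * (y / sigma l).
  rewrite (bigD1 k) //= (bigD1 l) /=; last by rewrite lk.
  rewrite big1 => [|i /andP[ik il]]; last by rewrite (negbTE ik) (negbTE il) mulr0.
  by rewrite eqxx lk eqxx addr0 !mulrA !(mulrAC _ _^-1).
rewrite /pareto_surv; under eq_bigr => j _ do rewrite pair_sum.
by rewrite prod_powR_bool2 ?divr_ge0 ?(ltW (sigma_gt0 k)) ?(ltW (sigma_gt0 l)).
Qed.

Lemma gamma_pairC (k l : 'I_n) : gamma_pair c gamma k l = gamma_pair c gamma l k.
Proof. by apply: eq_bigr => j _; rewrite (mulrC (c k j)%:R). Qed.

Lemma gamma_single_ge0 (k l : 'I_n) : (forall j, 0 <= gamma j) ->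
  0 <= gamma_single c gamma k l.
Proof.
move=> gamma_ge0; apply: sumr_ge0 => j _; rewrite mulr_ge0 //.
by case: (c k j); case: (c l j); rewrite /= ?subrr ?subr0 ?mulr0 ?mul0r ?mulr1.
Qed.

Lemma gamma_pair_m_fun (k l : 'I_n) (x : R) : gamma_pair c gamma k l != 0 ->
  gamma_pair c gamma k l * m_fun c gamma sigma k l x = sigma k * (1 + x / sigma l).
Proof. by move=> gp_neq0; rewrite /m_fun mulrA mulrCA divff // mulr1. Qed.

End multivariate_pareto.

Section pareto_random_vector.
Context {d} {T : measurableType d} {R : realType} {P : probability T R}.
Context {n : nat} {X : 'I_n -> {RV P >-> R}}.
Context {c : 'I_n -> 'I_n.+1 -> bool} {sigma : 'I_n -> R} {gamma : 'I_n.+1 -> R}.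
Hypothesis sigma_gt0 : forall i, 0 < sigma i.
Hypothesis pareto_law : forall x : 'I_n -> R, (forall i, 0 < x i) ->
  P [set t | forall i, x i < X i t] = (pareto_surv c sigma gamma x)%:E.

Lemma pareto_survival (x : 'I_n -> R) : (forall i, 0 <= x i) ->
  P [set t | forall i, x i < X i t] = (pareto_surv c sigma gamma x)%:E.
Proof.
move=> x_ge0; apply: (survival_closed_orthant _ _ pareto_law x_ge0).
exact: pareto_surv_right_cont.
Qed.

Lemma pareto_all_pos : P [set t | forall i, 0 < X i t] = 1%E.
Proof. by rewrite (pareto_survival (fun=> 0)) // pareto_surv0. Qed.

Lemma pareto_component_pos (k : 'I_n) : P [set t | 0 < X k t] = 1%E.
Proof.
have : (P [set t | forall i, (0 < X i t)%R] <= P [set t | (0 < X k t)%R])%E.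
  apply: le_measure; rewrite ?inE; [exact: measurable_all_gt | exact: measurable_RV_gt |].
  by move=> t; apply.
rewrite pareto_all_pos => one_le; apply/le_anti; rewrite one_le andbT.
exact/probability_le1/measurable_RV_gt.
Qed.

Lemma pareto_pair_survival (k l : 'I_n) : k != l -> forall a y, 0 <= a -> 0 <= y ->
  P [set t | a < X k t /\ y < X l t] =
  (biv_surv (sigma k) (sigma l) (gamma_pair c gamma k l)
    (gamma_single c gamma k l) (gamma_single c gamma l k) a y)%:E.
Proof.
move=> kl a y a_ge0 y_ge0; have lk : (l == k) = false by rewrite eq_sym; exact: negbTE.
pose x i := if i == k then a else if i == l then y else 0.
have x_ge0 i : 0 <= x i by rewrite /x; case: ifP => _ //; case: ifP.
have all_pos_meas := measurable_all_gt (X := X) (fun=> 0).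
rewrite -pareto_surv_pair // -pareto_survival //.
rewrite -(probability_setI_full _ all_pos_meas pareto_all_pos).
  congr (P _); apply/seteqP; split => t /=.
    move=> [[Xk Xl] X_pos] i; rewrite /x.
    by case: eqP => [->|_] //; case: eqP => [->|_] //; exact: X_pos.
  move=> Xt; split; [split|].
  - by have := Xt k; rewrite /x eqxx.
  - by have := Xt l; rewrite /x lk eqxx.
  - by move=> i; exact: le_lt_trans (x_ge0 i) (Xt i).
exact: measurableI (measurable_RV_gt _ _) (measurable_RV_gt _ _).
Qed.

End pareto_random_vector.

Theorem theorem3p2 (R : realType) (d : measure_display) (T : measurableType d)
  (P : probability T R) (n : nat) (X : 'I_n -> {RV P >-> R})
  (c : 'I_n -> 'I_n.+1 -> bool) (sigma : 'I_n -> R) (gamma : 'I_n.+1 -> R) :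
  (2 <= n)%N ->
  (forall i, 0 < sigma i) ->
  (forall j, 0 < gamma j) ->
  (forall x : 'I_n -> R, (forall i, 0 < x i) ->
     P [set t | forall i, x i < X i t] =
     (\prod_(j < n.+1)
        (1 + \sum_(i < n) (c i j)%:R / sigma i * x i) `^ (- gamma j))%:E) ->
  forall k l : 'I_n, k != l ->
  0 < gamma_pair c gamma k l ->
  forall xk xl : R, 0 < xk -> 0 < xl ->
  (fun h : R =>
     fine (P [set t | xk < X k t /\ xl - h < X l t <= xl + h])
     / fine (P [set t | xl - h < X l t <= xl + h]))
  @ 0^'+ -->
  ((gamma_pair c gamma k l / gamma_star c gamma k l
    + gamma_single c gamma l k / gamma_star c gamma k l
      * (1 + xk / (gamma_pair c gamma k l * m_fun c gamma sigma k l xl)))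
   * (1 + xk / sigma k) `^ (- gamma_single c gamma k l)
   * (1 + xk / (gamma_pair c gamma k l * m_fun c gamma sigma k l xl))
       `^ (- gamma_pair c gamma l k - 1)).
Proof.
(* [2 <= n] is implied by [k != l]. *)
move=> _ sigma_gt0 gamma_gt0 law k l kl gp_gt0 xk xl xk_gt0 xl_gt0.
have gl_ge0 := gamma_single_ge0 c gamma l k (fun j => ltW (gamma_gt0 j)).
rewrite /gamma_star (gamma_pairC c gamma l k) gamma_pair_m_fun ?gt_eqF //.
apply: cvg_trans (biv_surv_conditional_cvg _ _ _ _ _ (sigma_gt0 k) (sigma_gt0 l)
  gp_gt0 gl_ge0 (ltW xk_gt0) (ltW xl_gt0)).
apply: near_eq_cvg; near=> h.
rewrite (conditional_gt_itv_ratio (pareto_pair_survival sigma_gt0 law _ _ kl)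
  (pareto_component_pos sigma_gt0 law k)) ?(ltW xk_gt0) //.
have h_gt0 : 0 < h by near: h; exact: nbhs_right_gt.
have h_lt_xl : h < xl by near: h; exact: nbhs_right_lt.
by rewrite (ltW h_gt0) (ltW h_lt_xl).
Unshelve. all: by end_near. Qed.
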